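(* Let $m,n\ge 3$ be integers and fix a vertex $u$ of ${\rm SR}(m,n)$. Then every neighbour $v$ of $u$ lies in at most two maximal cliques of the subgraph induced on the set of neighbours of $u$ (equivalently, in at most two maximal cliques of ${\rm SR}(m,n)$ containing both $u$ and $v$) if and only if $u$ has exactly one nonzero coordinate.
   Context: ${\rm SR}(m,n)$ is the graph whose vertices are the vectors in $\{0,1,2,\dots\}^m$ with coordinate sum $n$, two vertices being adjacent when they differ in precisely two coordinate positions. *)

From mathcomp Require Import all_boot.
Set Implicit Arguments. Unset Strict Implicit. Unset Printing Implicit Defensive.

(* Vertices of SR(m,n): vectors in {0,1,2,...}^m with coordinate sum n.
   Every coordinate is at most n, so we encode them as finite functions
   'I_m -> 'I_n.+1 (no loss), restricted to coordinate sum n. *)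
Definition SRvert (m n : nat) :=
  {x : {ffun 'I_m -> 'I_n.+1} | \sum_(i < m) (x i : nat) == n}.

Definition coord m n (x : SRvert m n) (i : 'I_m) : nat := val x i.

Definition SRadj m n (x y : SRvert m n) : bool :=
  #|[set i : 'I_m | coord x i != coord y i]| == 2.

Definition SRnbhd m n (u : SRvert m n) : {set SRvert m n} :=
  [set v | SRadj u v].

Definition SRclique m n (K : {set SRvert m n}) : bool :=
  [forall x in K, forall y in K, (x != y) ==> SRadj x y].

Definition nbhd_clique m n (u : SRvert m n) : pred {set SRvert m n} :=
  fun K => (K \subset SRnbhd u) && SRclique K.

Definition nbhd_maxcliques m n (u : SRvert m n) : {set {set SRvert m n}} :=
  [set K | maxset (nbhd_clique u) K].

From mathcomp Require Import all_boot zify.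
Set Implicit Arguments. Unset Strict Implicit. Unset Printing Implicit Defensive.

(* If [u = n e_p], every neighbour of [u] is [(n - a) e_p + a e_q] with [0 < a], and two
   neighbours are adjacent exactly when they share the direction [q] or the coordinate at [p].
   Hence a maximal clique of the neighbourhood through [v] is either the class of [v]'s
   direction or the class of [v]'s [p]-coordinate.  Otherwise there are distinct [i], [j], [l]
   with [u_j, u_l > 0] and [u_i > 0] or [u_j > 1] (this needs [m, n >= 3]); perturbing [u] on
   these coordinates yields a neighbour [v] with three pairwise non-adjacent common neighbours
   of [u] and [v], which lie in three distinct maximal cliques. *)

Section SplitSums.
Variable I : finType.
Implicit Types f : I -> nat.

Lemma sum_split2 f p q : p != q ->
  \sum_i f i = f p + f q + \sum_(i | (i != p) && (i != q)) f i.
Proof.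
by move=> pq; rewrite (bigD1 p) //= (bigD1 q) 1?eq_sym //= addnA.
Qed.

Lemma sum_split3 f p q r : p != q -> p != r -> q != r ->
  \sum_i f i = f p + f q + f r + \sum_(i | [&& i != p, i != q & i != r]) f i.
Proof.
move=> pq pr qr; rewrite (sum_split2 _ pq) (bigD1 r) /=; last by rewrite !(eq_sym r) pr qr.
by rewrite !addnA; congr (_ + _); apply: eq_bigl => i; rewrite andbA.
Qed.

End SplitSums.

Section Coordinates.
Variables m n : nat.
Implicit Types x y : SRvert m n.

Lemma sum_coord x : \sum_(i < m) coord x i = n.
Proof. by apply/eqP; case: x. Qed.

Lemma coord_le x i : coord x i <= n.
Proof. by rewrite -ltnS ltn_ord. Qed.

Lemma coord_inj x y : coord x =1 coord y -> x = y.
Proof. by move=> exy; apply/val_inj/ffunP => i; apply/val_inj/exy. Qed.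

Lemma SRadjC x y : SRadj x y = SRadj y x.
Proof.
rewrite /SRadj (_ : [set i | _] = [set i | coord y i != coord x i]) //.
by apply/setP => i; rewrite !inE eq_sym.
Qed.

Lemma SRadjE x y : SRadj x y = (\sum_i (coord x i != coord y i) == 2).
Proof.
rewrite /SRadj -sum1_card big_mkcond /=.
by congr (_ == 2); apply: eq_bigr => i _; rewrite inE; case: ifP.
Qed.

Lemma SRvert_of_subproof (f : 'I_m -> nat) : \sum_t f t = n ->
  \sum_t (([ffun t => inord (f t)] : {ffun 'I_m -> 'I_n.+1}) t : nat) == n.
Proof.
move=> fn; apply/eqP; rewrite -[RHS]fn; apply/eq_bigr => t _.
by rewrite ffunE inordK // ltnS -fn (bigD1 t) //= leq_addr.
Qed.

Definition SRvert_of f (fn : \sum_t f t = n) : SRvert m n :=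
  Sub [ffun t => inord (f t)] (SRvert_of_subproof fn).

Lemma coord_SRvert_of f (fn : \sum_t f t = n) : coord (SRvert_of fn) =1 f.
Proof.
by move=> t; rewrite /coord /= ffunE inordK // ltnS -fn (bigD1 t) //= leq_addr.
Qed.

Lemma nbhd_cliqueP (u : SRvert m n) (K : {set SRvert m n}) :
  reflect (K \subset SRnbhd u /\ {in K &, forall x y, x != y -> SRadj x y})
          (nbhd_clique u K).
Proof.
rewrite /nbhd_clique /SRclique; apply: (iffP andP) => -[Ku Kcl]; split => //.
- move=> x y xK yK; move/forallP/(_ x): Kcl; rewrite xK => /forallP/(_ y).
  by rewrite yK /= => /implyP.
- apply/forallP => x; apply/implyP => xK; apply/forallP => y.
  by apply/implyP => yK; apply/implyP; apply: Kcl.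
Qed.

End Coordinates.

Section Concentrated.
Variables (m n : nat) (p : 'I_m) (u : SRvert m n).
Hypothesis u_off_p : forall i, i != p -> coord u i = 0.
Implicit Types w : SRvert m n.

(* The neighbours of [u = n e_p] are the points [(n - a) e_p + a e_q] with [0 < a]. *)
Definition on_edge (q : 'I_m) w := [/\ q != p, coord w p < n,
  coord w q = n - coord w p & forall i, i != p -> i != q -> coord w i = 0].

Lemma coord_u_p : coord u p = n.
Proof.
have := sum_coord u; rewrite (bigD1 p) //= big1 ?addn0 // => i /u_off_p.
Qed.

Lemma nbhd_on_edge w : SRadj u w -> exists q, on_edge q w.
Proof.
set D := [set i | coord u i != coord w i] => /eqP D2.
have pD : p \in D.
  apply: contraT; rewrite inE negbK coord_u_p => /eqP/esym wp.
  have [a aD] : exists a, a \in D by apply/card_gt0P; rewrite D2.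
  have ap : a != p by apply: contraTneq aD => ->; rewrite inE coord_u_p wp eqxx.
  move: aD; rewrite inE u_off_p // => wa.
  by have := sum_coord w; rewrite (sum_split2 _ ap) wp; lia.
have /eqP/cards1P[q Dq] : #|D :\ p| = 1.
  by move: D2; rewrite /D (cardsD1 p) pD add1n => /eqP; rewrite eqSS => /eqP.
have Dp i : i != p -> (coord u i != coord w i) = (i == q).
  by move=> ip; move/setP/(_ i): Dq; rewrite !inE ip.
have qp : q != p by have /setD1P[] : q \in D :\ p by rewrite Dq set11.
have w_off i : i != p -> i != q -> coord w i = 0.
  move=> ip iq; apply/eqP; move: (Dp i ip).
  by rewrite (negbTE iq) u_off_p // eq_sym => /negbFE.
exists q; split => //.
- by move: pD; rewrite inE coord_u_p; have := coord_le w p; lia.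
- have pq : p != q by rewrite eq_sym.
  have := sum_coord w; rewrite (sum_split2 _ pq).
  by rewrite big1 => [|i /andP[ip iq]]; [lia | exact: w_off].
Qed.

Lemma on_edge_coord_neq0 q w r : on_edge q w -> r != p -> (coord w r != 0) = (r == q).
Proof.
case=> _ wp wq w_off rp; have [->|rq] := eqVneq r q; first by rewrite wq; lia.
by rewrite w_off ?eqxx.
Qed.

Lemma on_edge_adj q w w' : on_edge q w -> on_edge q w' -> w != w' -> SRadj w w'.
Proof.
case=> qp wp wq w_off [_ w'p w'q w'_off] ww'.
have pq : p != q by rewrite eq_sym.
have wp_neq : coord w p != coord w' p.
  apply: contra ww' => /eqP e; apply/eqP/coord_inj => i.
  have [->//|ip] := eqVneq i p; have [->|iq] := eqVneq i q; first by rewrite wq w'q e.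
  by rewrite w_off ?w'_off.
rewrite SRadjE (sum_split2 _ pq) big1 => [|i /andP[ip iq]]; last by rewrite w_off ?w'_off.
by rewrite wp_neq wq w'q; lia.
Qed.

Lemma on_edge_adjE q q' w w' : on_edge q w -> on_edge q' w' -> q != q' ->
  SRadj w w' = (coord w p == coord w' p).
Proof.
case=> qp wp wq w_off [q'p w'p w'q' w'_off] qq'.
have pq : p != q by rewrite eq_sym.
have pq' : p != q' by rewrite eq_sym.
rewrite SRadjE (sum_split3 _ pq pq' qq') big1 => [|i /and3P[ip iq iq']].
  by rewrite wq w'q' (w_off q') 1?eq_sym // (w'_off q) //; lia.
by rewrite w_off ?w'_off.
Qed.

Definition edge_nbhd q := [set w in SRnbhd u | coord w q != 0].
Definition level_nbhd c := [set w in SRnbhd u | coord w p == c].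

Lemma edge_nbhd_clique q : q != p -> nbhd_clique u (edge_nbhd q).
Proof.
move=> qp; apply/nbhd_cliqueP; split; first by apply/subsetP => w; rewrite inE => /andP[].
move=> w w'; rewrite !inE => /andP[uw wq] /andP[uw' w'q].
have [r er] := nbhd_on_edge uw; have [r' er'] := nbhd_on_edge uw'.
move: wq w'q; rewrite (on_edge_coord_neq0 er qp) (on_edge_coord_neq0 er' qp).
by move=> /eqP qr /eqP qr'; subst r r'; exact: on_edge_adj er er'.
Qed.

Lemma level_nbhd_clique c : nbhd_clique u (level_nbhd c).
Proof.
apply/nbhd_cliqueP; split; first by apply/subsetP => w; rewrite inE => /andP[].
move=> w w'; rewrite !inE => /andP[uw /eqP wc] /andP[uw' /eqP w'c].
have [r er] := nbhd_on_edge uw; have [r' er'] := nbhd_on_edge uw'.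
have [rr'|rr' _] := eqVneq r r'; first by subst r'; exact: on_edge_adj er er'.
by rewrite (on_edge_adjE er er' rr') wc w'c.
Qed.

Lemma nbhd_clique_sub_edge_or_level q v K : on_edge q v -> nbhd_clique u K -> v \in K ->
  K \subset edge_nbhd q \/ K \subset level_nbhd (coord v p).
Proof.
move=> ev /nbhd_cliqueP[Ku adjK] vK.
have uK w : w \in K -> SRadj u w by move/(subsetP Ku); rewrite inE.
have level_eq a b ra rb : a \in K -> b \in K -> on_edge ra a -> on_edge rb b -> ra != rb ->
    coord a p = coord b p.
  move=> aK bK ea eb rab; apply/eqP; rewrite -(on_edge_adjE ea eb rab) adjK //.
  apply: contra rab => /eqP ab; have [rap _ _ _] := ea.
  by rewrite -(on_edge_coord_neq0 eb rap) -ab (on_edge_coord_neq0 ea rap).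
have [Kq|/subsetPn[w wK wq]] := boolP (K \subset edge_nbhd q); [by left | right].
have [r er] := nbhd_on_edge (uK w wK); have [qp _ _ _] := ev.
have rq : r != q by move: wq; rewrite !inE uK //= (on_edge_coord_neq0 er qp) eq_sym.
apply/subsetP => w' w'K; rewrite !inE uK //=.
have [r' er'] := nbhd_on_edge (uK w' w'K).
have [r'q|r'q] := eqVneq r' q.
  rewrite r'q in er'; rewrite (level_eq _ _ _ _ w'K wK er' er) 1?eq_sym //.
  by rewrite (level_eq _ _ _ _ wK vK er ev rq).
by rewrite (level_eq _ _ _ _ w'K vK er' ev r'q).
Qed.

Lemma maxcliques_through_le2 v : SRadj u v ->
  #|[set K in nbhd_maxcliques u | v \in K]| <= 2.
Proof.
move=> uv; have [q ev] := nbhd_on_edge uv; have [qp _ _ _] := ev.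
apply: (leq_trans (subset_leq_card (_ : _ \subset [set edge_nbhd q; level_nbhd (coord v p)]))).
  apply/subsetP => K; rewrite !inE => /andP[/maxsetP[clK maxK] vK].
  case: (nbhd_clique_sub_edge_or_level ev clK vK) => sK; apply/orP; [left|right].
    by apply/eqP/esym/maxK => //; exact: edge_nbhd_clique.
  by apply/eqP/esym/maxK => //; exact: level_nbhd_clique.
by rewrite cards2; case: (_ != _).
Qed.

End Concentrated.

Section ThreeCliques.
Variables m n : nat.
Implicit Types u v x y z : SRvert m n.

Lemma pair_nbhd_clique u v w : SRadj u v -> SRadj u w -> SRadj v w ->
  nbhd_clique u [set v; w].
Proof.
move=> uv uw vw; apply/nbhd_cliqueP; split.
  by apply/subsetP => a; rewrite !inE => /orP[]/eqP->.
by move=> a b; rewrite !inE => /orP[]/eqP-> /orP[]/eqP->; rewrite ?eqxx // SRadjC.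
Qed.

(* Each [{v, w}] with [w] in [{x, y, z}] extends to a maximal clique, and these are distinct. *)
Lemma three_maxcliques_through u v x y z :
  SRadj u v -> SRadj u x -> SRadj u y -> SRadj u z ->
  SRadj v x -> SRadj v y -> SRadj v z -> x != y -> x != z -> y != z ->
  ~~ SRadj x y -> ~~ SRadj x z -> ~~ SRadj y z ->
  2 < #|[set K in nbhd_maxcliques u | v \in K]|.
Proof.
move=> uv ux uy uz vx vy vz xy xz yz nxy nxz nyz.
have [Kx mx sx] := maxset_exists (pair_nbhd_clique uv ux vx).
have [Ky my sy] := maxset_exists (pair_nbhd_clique uv uy vy).
have [Kz mz sz] := maxset_exists (pair_nbhd_clique uv uz vz).
have pairK (K : {set SRvert m n}) w : [set v; w] \subset K -> (v \in K) * (w \in K).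
  by move=> s; split; apply: (subsetP s); rewrite !inE eqxx ?orbT.
have memK (K : {set SRvert m n}) w : maxset (nbhd_clique u) K -> [set v; w] \subset K ->
    K \in [set K in nbhd_maxcliques u | v \in K].
  by move=> mK sK; rewrite !inE mK (pairK _ _ sK).
have neqK (K1 K2 : {set SRvert m n}) a b : maxset (nbhd_clique u) K1 ->
    [set v; a] \subset K1 -> [set v; b] \subset K2 -> a != b -> ~~ SRadj a b -> K1 != K2.
  move=> /maxsetp/nbhd_cliqueP[_ adjK] s1 s2 ab; apply: contra => /eqP e.
  by apply: adjK => //; [rewrite (pairK _ _ s1) | rewrite e (pairK _ _ s2)].
have Kx_in := memK _ _ mx sx; have Ky_in := memK _ _ my sy; have Kz_in := memK _ _ mz sz.
rewrite (cardsD1 Kx) Kx_in (cardsD1 Ky) in_setD1 Ky_in eq_sym (neqK _ _ _ _ mx sx sy xy nxy).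
rewrite (cardsD1 Kz) !in_setD1 Kz_in !(eq_sym Kz) (neqK _ _ _ _ mx sx sz xz nxz).
by rewrite (neqK _ _ _ _ my sy sz yz nyz).
Qed.

End ThreeCliques.

Section Perturb.
Variables (m n : nat) (u : SRvert m n) (i j l : 'I_m).
Hypotheses (ij : i != j) (il : i != l) (jl : j != l).

Let s := coord u i + coord u j + coord u l.

Definition replace3 A B C t :=
  if t == i then A else if t == j then B else if t == l then C else coord u t.

Lemma sum_replace3 A B C : A + B + C = s -> \sum_t replace3 A B C t = n.
Proof.
move=> ABC; rewrite -[RHS](sum_coord u) !(sum_split3 _ ij il jl) /replace3 !eqxx.
rewrite !(eq_sym j) !(eq_sym l) (negbTE ij) (negbTE il) (negbTE jl) ABC.
congr (_ + _); apply: eq_bigr => t /and3P[ti tj tl].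
by rewrite (negbTE ti) (negbTE tj) (negbTE tl).
Qed.

Definition vert3 A B C (ABC : A + B + C = s) : SRvert m n :=
  SRvert_of (sum_replace3 ABC).

Lemma vert3_id : vert3 (erefl s) = u.
Proof.
apply: coord_inj => t; rewrite coord_SRvert_of /replace3.
by case: eqP => [->//|_]; case: eqP => [->//|_]; case: eqP => [->|].
Qed.

Lemma vert3_adjE A B C A' B' C' (ABC : A + B + C = s) (ABC' : A' + B' + C' = s) :
  SRadj (vert3 ABC) (vert3 ABC') = ((A != A') + (B != B') + (C != C') == 2).
Proof.
rewrite SRadjE (sum_split3 _ ij il jl) big1 => [|t /and3P[ti tj tl]].
  rewrite !coord_SRvert_of /replace3 !eqxx !(eq_sym j) !(eq_sym l).
  by rewrite (negbTE ij) (negbTE il) (negbTE jl) addn0.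
by rewrite !coord_SRvert_of /replace3 (negbTE ti) (negbTE tj) (negbTE tl) eqxx.
Qed.

Lemma vert3_neq A B C A' B' C' (ABC : A + B + C = s) (ABC' : A' + B' + C' = s) :
  A != A' -> vert3 ABC != vert3 ABC'.
Proof.
apply: contra => /eqP/(congr1 (fun x => coord x i)).
by rewrite !coord_SRvert_of /replace3 eqxx => ->.
Qed.

Hypotheses (uj : 0 < coord u j) (ul : 0 < coord u l).

(* [v = u + e_i - e_j] is adjacent to [x], [y = u + e_l - e_j] and [z = u + e_i - e_l],
   where [x] is [u - e_i + e_j] or [u + 2 e_i - 2 e_j]; these three are pairwise non-adjacent. *)
Lemma three_maxcliques_witness : (0 < coord u i) || (1 < coord u j) ->
  exists2 v, SRadj u v & 2 < #|[set K in nbhd_maxcliques u | v \in K]|.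
Proof.
move=> hij.
have [[A B] /= ABc AB_fresh] : exists2 AB : nat * nat, AB.1 + AB.2 + coord u l = s &
    [&& AB.1 != coord u i, AB.1 != (coord u i).+1, AB.2 != coord u j & AB.2 != (coord u j).-1].
  case/orP: hij => h; [exists ((coord u i).-1, (coord u j).+1) |
                      exists ((coord u i).+2, (coord u j).-2)]; by rewrite /s /=; lia.
have Hv : (coord u i).+1 + (coord u j).-1 + coord u l = s by rewrite /s; lia.
have Hy : coord u i + (coord u j).-1 + (coord u l).+1 = s by rewrite /s; lia.
have Hz : (coord u i).+1 + coord u j + (coord u l).-1 = s by rewrite /s; lia.
pose u0 := vert3 (erefl s); pose v := vert3 Hv; pose x := vert3 ABc.
pose y := vert3 Hy; pose z := vert3 Hz.
have u0u : u0 = u by exact: vert3_id.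
exists v; first by rewrite -u0u vert3_adjE; lia.
apply: (three_maxcliques_through (x := x) (y := y) (z := z)); rewrite -?u0u;
  by [rewrite vert3_adjE; lia | apply: vert3_neq; lia].
Qed.

End Perturb.

Lemma support_triple m n (u : SRvert m n) : 3 <= m -> 3 <= n ->
  #|[set i | coord u i != 0]| != 1 ->
  exists i j l, [/\ i != j, i != l & j != l] /\
    [/\ 0 < coord u j, 0 < coord u l & (0 < coord u i) || (1 < coord u j)].
Proof.
move=> hm hn; set S := [set i | coord u i != 0] => S_neq1.
have inS t : (t \in S) = (0 < coord u t) by rewrite inE lt0n.
have [S0|S_gt0] := posnP #|S|.
  have := sum_coord u; rewrite big1 => [|t _]; first lia.
  have : t \notin S by rewrite (cards0_eq S0) inE.
  by rewrite inS; lia.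
have [S2|S_neq2] := eqVneq #|S| 2.
  have /eqP/cards2P[j [l [jl S_jl]]] := S2.
  have u_off t : t != j -> t != l -> coord u t = 0.
    move=> tj tl; have : t \notin S by rewrite S_jl !inE negb_or tj tl.
    by rewrite inS; lia.
  have ujl : coord u j + coord u l = n.
    by rewrite -[RHS](sum_coord u) (sum_split2 _ jl) big1 ?addn0 // => t /andP[]; apply: u_off.
  have /card_gt0P[i] : 0 < #|~: [set j; l]|.
    by have := cardsC [set j; l]; rewrite cards2 jl card_ord; lia.
  rewrite !inE negb_or => /andP[ij il].
  have [uj ul] : 0 < coord u j /\ 0 < coord u l by rewrite -!inS S_jl !inE !eqxx orbT.
  have [hj|hj] := leqP 2 (coord u j).
    by exists i, j, l; split; split => //; rewrite hj orbT.
  by exists i, l, j; split; [split; rewrite // eq_sym | split => //; apply/orP; right; lia].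
have /card_gt0P[j jS] := S_gt0.
have /card_gt0P[l lS] : 0 < #|S :\ j| by move: S_neq1 S_neq2; rewrite (cardsD1 j) jS; lia.
have /card_gt0P[i iS] : 0 < #|S :\ j :\ l|.
  by move: S_neq1 S_neq2 S_gt0; rewrite (cardsD1 j) jS (cardsD1 l (S :\ j)) lS; lia.
move: iS lS; rewrite !inE => /andP[il /andP[ij ui]] /andP[lj ul].
move: jS; rewrite inE => uj.
exists i, j, l; split; split; rewrite ?lt0n //; first by rewrite eq_sym.
by rewrite ui.
Qed.

Theorem lemma12 (m n : nat) (hm : 3 <= m) (hn : 3 <= n) (u : SRvert m n) :
  (forall v : SRvert m n, SRadj u v ->
     #|[set K in nbhd_maxcliques u | v \in K]| <= 2)
  <-> #|[set i : 'I_m | coord u i != 0]| = 1.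
Proof.
split=> [le2 | /eqP/cards1P[p supp_u]].
  apply/eqP/contraT => supp_neq1.
  have [i [j [l [[ij il jl] [uj ul hij]]]]] := support_triple hm hn supp_neq1.
  have [v uv] := three_maxcliques_witness ij il jl uj ul hij.
  by rewrite ltnNge le2.
apply: (maxcliques_through_le2 (p := p)) => i ip.
by move/setP/(_ i): supp_u; rewrite !inE (negbTE ip) => /negbFE/eqP.
Qed.
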